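(* Let $n,x$ be positive integers with $x\le n$ and let $M_1,\dots,M_s$ be perfect matchings of $K_{2n}$. Let $M$ be a perfect matching of $K_{2n}$ chosen uniformly at random. For $i\in\{1,\dots,s\}$ and an $x$-matching $X\subseteq M_i$, let $A_{i,X}$ be the event $X\subseteq M$. Fix such a pair $(i,X)$, and let $\mathcal S$ be any set of pairs $(i',X')$ with $i'\in\{1,\dots,s\}$ and $X'\subseteq M_{i'}$ an $x$-matching whose vertex set is disjoint from the vertex set of $X$. Let $E=\bigcap_{(i',X')\in\mathcal S}\overline{A_{i',X'}}$ and suppose $\mathbb P(E)>0$. Then $$\mathbb P(A_{i,X}\mid E)\le\frac{1}{N},\qquad\text{where } N=\sum_{j=\max(0,\,2x-n)}^{x}\binom{2x}{2j}\frac{(2j)!}{j!\,2^j}.$$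
   Context: An $x$-matching of $K_{2n}$ is a matching (set of pairwise vertex-disjoint edges) of size exactly $x$. The empty intersection (when $\mathcal S=\emptyset$) is the whole probability space. *)

From HB Require Import structures.
From mathcomp Require Import all_boot all_order all_algebra.
Set Implicit Arguments. Unset Strict Implicit. Unset Printing Implicit Defensive.
Import Order.TTheory GRing.Theory Num.Theory.

(* Vertex set of K_{2n}: 'I_(n.*2).  An edge of K_{2n} is a 2-element subset
   of the vertices; a set of edges is a {set {set V}}. *)

Definition is_matching (V : finType) (M : {set {set V}}) : bool :=
  [forall e in M, #|e| == 2] &&
  [forall e in M, forall f in M, (e != f) ==> [disjoint e & f]].

Definition x_matching (V : finType) (x : nat) (M : {set {set V}}) : bool :=
  is_matching M && (#|M| == x).

Definition perfect_matching (V : finType) (M : {set {set V}}) : bool :=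
  is_matching M && (cover M == [set: V]).

Definition pm_space (n : nat) : {set {set {set 'I_(n.*2)}}} :=
  [set M | perfect_matching M].

Definition prob (n : nat) (P : pred {set {set 'I_(n.*2)}}) : rat :=
  (#|[set M in pm_space n | P M]|%:R / #|pm_space n|%:R)%R.

Definition cond_prob (n : nat) (A E : pred {set {set 'I_(n.*2)}}) : rat :=
  (prob (fun M => A M && E M) / prob E)%R.

Definition ev_contains (n : nat) (X : {set {set 'I_(n.*2)}}) :
  pred {set {set 'I_(n.*2)}} := fun M => X \subset M.

Definition ev_avoid (n s : nat) (S : {set ('I_s * {set {set 'I_(n.*2)}})}) :
  pred {set {set 'I_(n.*2)}} := fun M => [forall p in S, ~~ (p.2 \subset M)].

Definition bigN (n x : nat) : rat :=
  (\sum_((x.*2 - n)%N <= j < x.+1)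
     'C(x.*2, j.*2)%:R * ((j.*2)`!%:R / (j`! * 2 ^ j)%:R))%R.

(* Switching argument.  Put U = V(X) and let K = M \ X, a perfect matching of
   the complement of U.  Given M containing X in E and a matching Y inside U whose
   set R of uncovered vertices satisfies |R| <= 2(n - x), pair off R canonically,
   send the pairs onto distinct edges of K, delete those edges and match each r
   in R with an endpoint of the edge its pair was sent to.  The result is again a
   perfect matching; it keeps every edge of M avoiding U, so it still lies in E;
   and it determines (M, Y): Y is its set of edges inside U, and K consists of
   its edges avoiding U together with the edges meeting the vertices of R.
   Hence |A(i,X) & E| * #Y <= |E|.  Finally #Y = N, since U carries
   C(2x,2j) (2j)!/(j! 2^j) matchings with j edges, and those with
   2x - n <= j <= x are exactly the admissible ones. *)

From HB Require Import structures.
From mathcomp Require Import all_boot all_order all_algebra zify.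
Import Order.TTheory GRing.Theory Num.Theory.
Set Implicit Arguments. Unset Strict Implicit. Unset Printing Implicit Defensive.

Section SetFacts.
Variable T : finType.
Implicit Types (A B : {set T}) (D P : {set {set T}}).

Lemma sum_nat_pred_card A (p : pred T) : \sum_(y in A) (p y : nat) = #|[set y in A | p y]|.
Proof.
rewrite (eq_bigr (fun y => if p y then 1 else 0)) => [|y _]; last by case: (p y).
by rewrite -big_mkcondr sum1_card cardsE.
Qed.

Lemma disjoint_setD A B : [disjoint A & B :\: A].
Proof. by rewrite disjoint_sym; apply/setDidPl; rewrite setDDl setUid. Qed.

Lemma subset_setC_eq0 A B : A \subset B -> A \subset ~: B -> A = set0.
Proof. by move=> AB ACB; apply/eqP; rewrite -subset0 -(setICr B) subsetI AB. Qed.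

Lemma cover_set0 : cover (set0 : {set {set T}}) = set0.
Proof. exact: big_set0. Qed.

Lemma cover_setU1 A P : cover (A |: P) = A :|: cover P.
Proof. by rewrite /cover bigcup_setU big_set1. Qed.

Lemma cover_setD P D : trivIset P -> D \subset P -> cover (P :\: D) = cover P :\: cover D.
Proof.
move=> tiP /subsetP DP; apply/setP => v; rewrite inE.
apply/bigcupP/andP => [[B /setDP [BP BD] vB] | [vD /bigcupP [B BP vB]]].
  split; last by apply/bigcupP; exists B.
  apply/bigcupP => -[B' B'D vB'].
  by move: BD; rewrite -(def_pblock tiP BP vB) (def_pblock tiP (DP _ B'D) vB') B'D.
exists B => //; rewrite inE BP andbT; apply: contraNN vD => BD.
by apply/bigcupP; exists B.
Qed.

Lemma notin_disjoint_cover A P : A != set0 -> [disjoint A & cover P] -> A \notin P.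
Proof.
move=> A0 dj; apply/negP => AP.
by move: (disjointWr (bigcup_sup A AP) dj); rewrite -setI_eq0 setIid (negbTE A0).
Qed.

End SetFacts.

Section Matchings.
Variable V : finType.
Implicit Types (A M : {set {set V}}) (e f : {set V}).

Lemma is_matchingP M : reflect
  ((forall e, e \in M -> #|e| = 2) /\
   (forall e f, e \in M -> f \in M -> e != f -> [disjoint e & f]))
  (is_matching M).
Proof.
apply: (iffP andP) => [[/forall_inP M2 /forall_inP Mdj]|[M2 Mdj]].
  split=> [e /M2/eqP // | e f eM fM]; exact/implyP/(forall_inP (Mdj e eM)).
split; apply/forall_inP => e eM; first exact/eqP/M2.
by apply/forall_inP => f fM; apply/implyP; apply: Mdj.
Qed.

Lemma matching_trivIset M : is_matching M -> trivIset M.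
Proof. by case/is_matchingP => _ Mdj; apply/trivIsetP. Qed.

Lemma matching_edge_neq0 M e : is_matching M -> e \in M -> e != set0.
Proof. by case/is_matchingP => M2 _ /M2 e2; rewrite -card_gt0 e2. Qed.

Lemma matching_edge_eq M e f v :
  is_matching M -> e \in M -> f \in M -> v \in e -> v \in f -> e = f.
Proof.
move/matching_trivIset => tiM eM fM ve vf.
by rewrite -(def_pblock tiM eM ve) (def_pblock tiM fM vf).
Qed.

Lemma matchingS A M : A \subset M -> is_matching M -> is_matching A.
Proof.
move=> /subsetP AM /is_matchingP [M2 Mdj]; apply/is_matchingP.
by split=> [e /AM/M2 // | e f /AM eM /AM fM]; apply: Mdj.
Qed.

Lemma matching0 : is_matching (set0 : {set {set V}}).
Proof. by apply/is_matchingP; split=> [e|e f]; rewrite inE. Qed.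

Lemma matching1 e : #|e| = 2 -> is_matching [set e].
Proof.
move=> e2; apply/is_matchingP; split=> [f /set1P -> // | f f'].
by move=> /set1P -> /set1P ->; rewrite eqxx.
Qed.

Lemma matchingU A M : is_matching A -> is_matching M ->
  [disjoint cover A & cover M] -> is_matching (A :|: M).
Proof.
move=> /is_matchingP [A2 Adj] /is_matchingP [M2 Mdj] dj; apply/is_matchingP.
split=> [e /setUP [/A2|/M2] // | e f /setUP [eA|eM] /setUP [fA|fM] nef].
- exact: Adj.
- exact: disjointW (bigcup_sup e eA) (bigcup_sup f fM) dj.
- by rewrite disjoint_sym; apply: disjointW (bigcup_sup f fA) (bigcup_sup e eM) dj.
- exact: Mdj.
Qed.

Lemma matchingU1 e M : #|e| = 2 -> [disjoint e & cover M] ->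
  is_matching M -> is_matching (e |: M).
Proof. by move=> e2 dj mM; apply: matchingU; rewrite ?matching1 ?cover1. Qed.

Lemma card_cover_matching M : is_matching M -> #|cover M| = #|M|.*2.
Proof.
move=> mM; have /eqP <- := matching_trivIset mM.
by rewrite (eq_bigr (fun=> 2)) ?sum_nat_const ?muln2 //; case/is_matchingP: mM.
Qed.

End Matchings.

Section CountMatchings.
Variable V : finType.
Implicit Types (Y : {set {set V}}) (U e : {set V}).

Definition matchings_in U j : {set {set {set V}}} :=
  [set Y : {set {set V}} | [&& is_matching Y, cover Y \subset U & #|Y| == j]].

Definition edges_in U : {set {set V}} := [set e : {set V} | e \subset U & #|e| == 2].

Lemma matchings_inP U j Y :
  reflect [/\ is_matching Y, cover Y \subset U & #|Y| = j] (Y \in matchings_in U j).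
Proof. by rewrite inE; apply: (iffP and3P) => -[? ? /eqP]. Qed.

Lemma matchings_in0 U : matchings_in U 0 = [set set0].
Proof.
apply/setP => Y; rewrite in_set1; apply/matchings_inP/eqP => [[_ _ /eqP]|->].
  by rewrite cards_eq0 => /eqP.
by rewrite cards0 cover_set0 sub0set; split; first exact: matching0.
Qed.

Lemma matchings_in_fiber U j e : e \in edges_in U ->
  [set Y in matchings_in U j.+1 | e \in Y] = [set e |: Y | Y in matchings_in (U :\: e) j].
Proof.
rewrite inE => /andP [eU /eqP e2].
have e0 : e != set0 by rewrite -card_gt0 e2.
apply/setP => Y; rewrite inE; apply/andP/imsetP.
  case=> /matchings_inP [mY YU cY] eY; exists (Y :\ e); last by rewrite setD1K.
  apply/matchings_inP; split; first exact: matchingS (subsetDl _ _) mY.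
    by rewrite coverD1 ?setSD ?matching_trivIset.
  by move: cY; rewrite (cardsD1 e) eY => -[].
case=> Y' /matchings_inP [mY' Y'U cY'] ->.
have dj : [disjoint e & cover Y'] by move: Y'U; rewrite subsetD disjoint_sym => /andP [].
split; last exact: setU11.
apply/matchings_inP; split; first exact: matchingU1.
  by rewrite cover_setU1 subUset eU (subset_trans Y'U) ?subsetDl.
by rewrite cardsU1 (notin_disjoint_cover e0 dj) cY'.
Qed.

Lemma card_matchings_in_rec U j :
  j.+1 * #|matchings_in U j.+1| = \sum_(e in edges_in U) #|matchings_in (U :\: e) j|.
Proof.
have edgesY Y : Y \in matchings_in U j.+1 -> \sum_(e in edges_in U) (e \in Y) = j.+1.
  case/matchings_inP => /is_matchingP [Y2 _] YU <-.
  rewrite sum_nat_pred_card; suff -> : [set e in edges_in U | e \in Y] = Y by [].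
  apply/setP => e; rewrite !inE andbC.
  by case eY: (e \in Y); rewrite //= Y2 // (subset_trans (bigcup_sup e eY) YU).
rewrite mulnC -sum_nat_const -(eq_bigr _ edgesY) exchange_big /=.
apply: eq_bigr => e eE; rewrite sum_nat_pred_card (matchings_in_fiber j eE).
rewrite card_in_imset // => Y1 Y2 /matchings_inP [_ Y1U _] /matchings_inP [_ Y2U _].
have e0 : e != set0 by move: eE; rewrite inE -card_gt0 => /andP [_ /eqP ->].
have eY Y : cover Y \subset U :\: e -> e \notin Y.
  by rewrite subsetD disjoint_sym => /andP [_ /(notin_disjoint_cover e0)].
by move=> eq12; rewrite -(setU1K (eY _ Y1U)) -(setU1K (eY _ Y2U)) eq12.
Qed.

Lemma card_matchings_in U j : j`! * 2 ^ j * #|matchings_in U j| = #|U| ^_ j.*2.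
Proof.
elim: j U => [|j IHj] U; first by rewrite matchings_in0 cards1.
have -> : j.+1`! * 2 ^ j.+1 * #|matchings_in U j.+1| =
          2 * (j`! * 2 ^ j * (j.+1 * #|matchings_in U j.+1|)).
  by rewrite factS expnS; lia.
rewrite card_matchings_in_rec big_distrr /=.
rewrite (eq_bigr (fun=> (#|U| - 2) ^_ j.*2)) => [|e]; last first.
  by rewrite inE => /andP [eU /eqP e2]; rewrite IHj cardsD (setIidPr eU) e2.
rewrite sum_nat_const cards_draws mulnA (mulnC 2) (bin_ffact _ 2) ffactnS ffactn1.
by rewrite doubleS ffactnS ffactnS mulnA subn2.
Qed.

End CountMatchings.

Section EdgeMaps.
Variable V : finType.
Implicit Types (K Q : {set {set V}}) (R q : {set V}) (g : {ffun V -> V}).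

Lemma exists_matching_cover k R : #|R| = k.*2 ->
  exists Q, is_matching Q /\ cover Q = R.
Proof.
elim: k R => [|k IHk] R cR.
  exists set0; split; first exact: matching0.
  by move/eqP: cR; rewrite cards_eq0 => /eqP ->; rewrite cover_set0.
have /card_gt0P [a aR] : 0 < #|R| by rewrite cR.
have /card_gt0P [b /setD1P [ba bR]] : 0 < #|R :\ a|.
  by move: cR; rewrite (cardsD1 a) aR add1n doubleS => -[->].
have abR : [set a; b] \subset R by rewrite subUset !sub1set aR bR.
have e2 : #|[set a; b]| = 2 by rewrite cards2 eq_sym ba.
have [Q [mQ cQ]] : exists Q, is_matching Q /\ cover Q = R :\: [set a; b].
  by apply: IHk; rewrite cardsD (setIidPr abR) e2 cR doubleS; lia.
exists ([set a; b] |: Q); split.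
  by apply: matchingU1; rewrite // cQ disjoint_setD.
by rewrite cover_setU1 cQ -{1}(setIidPr abR) setID.
Qed.

Definition image_edges Q g : {set {set V}} := [set g @: q | q : {set V} in Q].

Definition edge_map Q K g : bool :=
  (image_edges Q g \subset K) && (#|image_edges Q g| == #|Q|).

Lemma edge_mapP Q K g : reflect
  ({in Q, forall q, g @: q \in K} /\ {in Q &, injective (fun q => g @: q)})
  (edge_map Q K g).
Proof.
apply: (iffP andP) => [[/subsetP QK /imset_injP inj]|[QK inj]].
  by split=> // q qQ; apply/QK/imset_f.
split; last exact/imset_injP.
by apply/subsetP => _ /imsetP [q qQ ->]; apply: QK.
Qed.

Lemma edge_map_setU1 Q K g a b c c' :
  a != b -> a \notin cover Q -> b \notin cover Q ->
  [set c; c'] \in K -> [set c; c'] \notin image_edges Q g -> edge_map Q K g ->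
  edge_map ([set a; b] |: Q) K [ffun v => if v == a then c else if v == b then c' else g v].
Proof.
move=> ab aQ bQ cK cQ /andP [QK /eqP cardQ].
set g' := [ffun v => _].
have g'Q : {in Q, forall q, g' @: q = g @: q}.
  move=> q qQ; apply: eq_in_imset => v vq; rewrite ffunE.
  have vQ : v \in cover Q by apply/bigcupP; exists q.
  by rewrite (negbTE (memPn aQ _ vQ)) (negbTE (memPn bQ _ vQ)).
have g'ab : g' @: [set a; b] = [set c; c'].
  by rewrite imsetU1 imset_set1 !ffunE eqxx eq_sym (negbTE ab) eqxx.
have abQ : [set a; b] \notin Q.
  by apply: contra aQ => abQ; apply/bigcupP; exists [set a; b]; rewrite ?setU11.
rewrite /edge_map.
have -> : image_edges ([set a; b] |: Q) g' = [set c; c'] |: image_edges Q g.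
  by rewrite /image_edges imsetU1 g'ab (eq_in_imset g'Q).
by rewrite subUset sub1set cK QK !cardsU1 cQ abQ cardQ eqxx.
Qed.

Lemma exists_edge_map Q K : is_matching Q -> is_matching K -> #|Q| <= #|K| ->
  exists g, edge_map Q K g.
Proof.
move Qk : #|Q| => k; elim: k Q Qk => [|k IHk] Q Qk mQ mK kK.
  exists [ffun v => v]; move/eqP: Qk; rewrite cards_eq0 => /eqP ->.
  by rewrite /edge_map /image_edges imset0 sub0set cards0.
have /card_gt0P [q0 q0Q] : 0 < #|Q| by rewrite Qk.
have Q'k : #|Q :\ q0| = k by move: Qk; rewrite (cardsD1 q0) q0Q add1n => -[].
have [g /andP [QK /eqP cardQ]] : exists g, edge_map (Q :\ q0) K g.
  by apply: IHk Q'k _ mK (ltnW kK); apply: matchingS (subD1set _ _) mQ.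
have [d dK dQ] : exists2 d, d \in K & d \notin image_edges (Q :\ q0) g.
  apply/subsetPn; apply: contraTN kK => /subset_leq_card.
  by rewrite cardQ Q'k leqNgt.
have [/(_ _ q0Q)/eqP/cards2P [a [b [ab q0ab]]] _] := is_matchingP _ mQ; subst q0.
have [/(_ _ dK)/eqP/cards2P [c [c' [_ dc]]] _] := is_matchingP _ mK; subst d.
have abQ : [disjoint [set a; b] & cover (Q :\ [set a; b])].
  by rewrite coverD1 ?matching_trivIset ?disjoint_setD.
exists [ffun v => if v == a then c else if v == b then c' else g v].
rewrite -(setD1K q0Q); apply: edge_map_setU1 => //; last by rewrite /edge_map QK cardQ eqxx.
  by rewrite (disjointFr abQ) // !inE eqxx.
by rewrite (disjointFr abQ) // !inE eqxx orbT.
Qed.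

End EdgeMaps.

Section Switch.
Variable V : finType.
Implicit Types (K M Q Y : {set {set V}}) (U e : {set V}) (g : {ffun V -> V}).

Definition switch U Y K Q g : {set {set V}} :=
  Y :|: (K :\: image_edges Q g) :|: [set [set r; g r] | r in U :\: cover Y].

Record switch_data U Y K Q g : Prop := SwitchData {
  matching_K : is_matching K;
  cover_K : cover K = ~: U;
  matching_Y : is_matching Y;
  cover_Y : cover Y \subset U;
  matching_Q : is_matching Q;
  cover_Q : cover Q = U :\: cover Y;
  edge_map_g : edge_map Q K g }.

Section SwitchData.
Variables (U : {set V}) (Y K Q : {set {set V}}) (g : {ffun V -> V}).
Hypothesis sw : switch_data U Y K Q g.
Local Notation R := (U :\: cover Y).
Local Notation D := (image_edges Q g).

Lemma image_edges_sub : D \subset K.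
Proof.
have [QK _] := edge_mapP _ _ _ (edge_map_g sw).
by apply/subsetP => _ /imsetP [q qQ ->]; apply: QK.
Qed.

Lemma cover_image_edges : cover D = g @: R.
Proof. by rewrite cover_imset -imset_cover (cover_Q sw). Qed.

Lemma cover_image_edges_out : cover D \subset ~: U.
Proof.
rewrite -(cover_K sw); apply/bigcupsP => d dD.
exact: bigcup_sup (subsetP image_edges_sub d dD).
Qed.

Lemma partner_out r : r \in R -> g r \notin U.
Proof.
move=> rR; have : g r \in cover D by rewrite cover_image_edges imset_f.
by move/(subsetP cover_image_edges_out); rewrite inE.
Qed.

Lemma partner_inj : {in R &, injective g}.
Proof.
have [QK inj] := edge_mapP _ _ _ (edge_map_g sw).
rewrite -(cover_Q sw) => r1 r2 /bigcupP [q1 q1Q r1q] /bigcupP [q2 q2Q r2q] gr12.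
have gq12 : g @: q1 = g @: q2.
  by apply: (matching_edge_eq (matching_K sw) (QK _ q1Q) (QK _ q2Q) (imset_f _ r1q));
     rewrite gr12 imset_f.
have [Q2 _] := is_matchingP _ (matching_Q sw); have [K2 _] := is_matchingP _ (matching_K sw).
move: r2q; rewrite -(inj _ _ q1Q q2Q gq12) => r2q.
have inj_q1 : {in q1 &, injective g} by apply/imset_injP; rewrite K2 ?Q2 ?QK.
exact: inj_q1.
Qed.

Lemma mem_switch_partner r : r \in R -> [set r; g r] \in switch U Y K Q g.
Proof. by move=> rR; rewrite /switch in_setU; apply/orP; right; apply/imsetP; exists r. Qed.

Lemma matching_partner_edges : is_matching [set [set r; g r] | r in R].
Proof.
have rU r : r \in R -> r \in U by case/setDP.
apply/is_matchingP; split=> [_ /imsetP [r rR ->] | _ _ /imsetP [r rR ->] /imsetP [r' r'R ->]].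
  by rewrite cards2 (_ : r != g r) //; apply: contraNneq (partner_out rR) => <-; apply: rU.
apply: contraNT => /pred0Pn [v /andP [/set2P vr /set2P vr']].
apply/eqP; suff -> : r = r' by [].
case: vr vr' => -> [] e.
- exact: e.
- by move: (partner_out r'R); rewrite -e rU.
- by move: (partner_out rR); rewrite e rU.
- exact: partner_inj.
Qed.

Lemma cover_partner_edges : cover [set [set r; g r] | r in R] = R :|: cover D.
Proof.
rewrite cover_image_edges cover_imset; apply/setP => v; rewrite inE.
apply/bigcupP/orP => [[r rR /set2P [->|->]] | [vR | /imsetP [r rR ->]]].
- by left.
- by right; apply: imset_f.
- by exists v; rewrite ?set21.
- by exists r; rewrite ?set22.
Qed.

Lemma cover_kept_edges : cover (K :\: D) = ~: U :\: cover D.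
Proof.
by rewrite cover_setD ?matching_trivIset ?(matching_K sw) ?image_edges_sub ?(cover_K sw).
Qed.

Lemma switch_perfect : perfect_matching (switch U Y K Q g).
Proof.
have YU := cover_Y sw; have DU := cover_image_edges_out.
have mK' : is_matching (K :\: D) by apply: matchingS (subsetDl _ _) (matching_K sw).
have dj1 : [disjoint cover Y & cover (K :\: D)].
  by rewrite cover_kept_edges disjoints_subset setCD setCK (subset_trans YU) ?subsetUl.
have dj2 : [disjoint cover (Y :|: K :\: D) & cover [set [set r; g r] | r in R]].
  rewrite /cover bigcup_setU -!/(cover _) cover_partner_edges cover_kept_edges.
  rewrite disjoints_subset setCU subUset !subsetI setCD subsetUr /=.
  rewrite subsetC (subset_trans DU) ?setCS //= setDE subsetIr andbT.
  exact: subset_trans (subsetIl _ _) (subsetUl _ _).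
apply/andP; split.
  by apply: matchingU dj2; rewrite ?matching_partner_edges ?matchingU ?(matching_Y sw).
rewrite /switch /cover !bigcup_setU -!/(cover _) cover_partner_edges cover_kept_edges.
apply/eqP/setP => v; rewrite !inE.
by case: (v \in U); case: (v \in cover Y); case: (v \in cover D).
Qed.

Lemma switch_inside : [set e in switch U Y K Q g | e \subset U] = Y.
Proof.
apply/setP => e; rewrite inE; apply/andP/idP => [[]|eY]; last first.
  by rewrite /switch !in_setU eY (subset_trans (bigcup_sup e eY) (cover_Y sw)).
case/setUP => [/setUP [//|/setDP [eK _]]|/imsetP [r rR ->]] eU.
  have eCU : e \subset ~: U by rewrite -(cover_K sw) bigcup_sup.
  by move: (matching_edge_neq0 (matching_K sw) eK); rewrite (subset_setC_eq0 eU eCU) eqxx.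
by move: (partner_out rR); rewrite (subsetP eU) // !inE eqxx orbT.
Qed.

Lemma switch_outside : [set e in switch U Y K Q g | [disjoint e & U]] = K :\: D.
Proof.
apply/setP => e; rewrite inE; apply/andP/idP => [[]|eK'].
  case/setUP => [/setUP [eY|//]|/imsetP [r rR ->]] djU.
    have eU : e \subset U := subset_trans (bigcup_sup e eY) (cover_Y sw).
    have eCU : e \subset ~: U by rewrite -disjoints_subset.
    by move: (matching_edge_neq0 (matching_Y sw) eY); rewrite (subset_setC_eq0 eU eCU) eqxx.
  by move: (disjointFr djU (set21 r (g r))); case/setDP: rR => ->.
split; first by rewrite /switch !in_setU eK' orbT.
by rewrite disjoints_subset -(cover_K sw) bigcup_sup //; case/setDP: eK'.
Qed.

Lemma switch_partner r w : r \in R -> [set r; w] \in switch U Y K Q g -> w = g r.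
Proof.
move=> rR rwS; have /andP [mS _] := switch_perfect.
have := matching_edge_eq mS rwS (mem_switch_partner rR) (set21 r w) (set21 r (g r)).
move=> /setP /(_ w); rewrite set22 => /esym /set2P [wr|//].
have [S2 _] := is_matchingP _ mS.
by move: (S2 _ rwS); rewrite wr setUid cards1.
Qed.

End SwitchData.
End Switch.

Section Rematch.
Variable V : finType.
Implicit Types (K M Q X Y : {set {set V}}) (U R : {set V}).

Lemma switch_injK U Y Q K1 K2 g1 g2 :
  switch_data U Y K1 Q g1 -> switch_data U Y K2 Q g2 ->
  switch U Y K1 Q g1 = switch U Y K2 Q g2 -> K1 = K2.
Proof.
move=> sw1 sw2 eS.
have eg : {in U :\: cover Y, g1 =1 g2}.
  by move=> r rR; apply: (switch_partner sw2 rR); rewrite -eS mem_switch_partner.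
have eD : image_edges Q g1 = image_edges Q g2.
  apply: eq_in_imset => q qQ; apply: eq_in_imset => v vq; apply: eg.
  by rewrite -(cover_Q sw1); apply/bigcupP; exists q.
rewrite -(setID K1 (image_edges Q g1)) -(setID K2 (image_edges Q g2)).
rewrite (setIidPr (image_edges_sub sw1)) (setIidPr (image_edges_sub sw2)).
by rewrite -(switch_outside sw1) -(switch_outside sw2) eS eD.
Qed.

Definition choose_matching R : {set {set V}} :=
  odflt set0 [pick Q | is_matching Q && (cover Q == R)].

Definition choose_edge_map Q K : {ffun V -> V} :=
  odflt [ffun v => v] [pick g | edge_map Q K g].

Lemma choose_matchingP k R : #|R| = k.*2 ->
  is_matching (choose_matching R) /\ cover (choose_matching R) = R.
Proof.
move/exists_matching_cover => [Q0 [mQ0 cQ0]]; rewrite /choose_matching.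
case: pickP => [Q /andP [mQ /eqP] // | noQ].
by move: (noQ Q0); rewrite mQ0 cQ0 eqxx.
Qed.

Lemma choose_edge_mapP Q K : is_matching Q -> is_matching K -> #|Q| <= #|K| ->
  edge_map Q K (choose_edge_map Q K).
Proof.
move=> mQ mK QK; have [g0 g0P] := exists_edge_map mQ mK QK.
by rewrite /choose_edge_map; case: pickP => [//|/(_ g0)]; rewrite g0P.
Qed.

Definition admissible U : {set {set {set V}}} :=
  [set Y | [&& is_matching Y, cover Y \subset U & #|U :\: cover Y| <= #|~: U|]].

Lemma admissibleP U Y : reflect
  [/\ is_matching Y, cover Y \subset U & #|U :\: cover Y| <= #|~: U|] (Y \in admissible U).
Proof. by rewrite inE; apply: and3P. Qed.

(* The pairing depends on Y alone, so that it can be recomputed from the image;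
   this is what makes rematch injective. *)
Definition rematch X M Y : {set {set V}} :=
  let Q := choose_matching (cover X :\: cover Y) in
  switch (cover X) Y (M :\: X) Q (choose_edge_map Q (M :\: X)).

Lemma perfect_matching_setD X M : perfect_matching M -> X \subset M ->
  is_matching (M :\: X) /\ cover (M :\: X) = ~: cover X.
Proof.
case/andP => mM /eqP cM XM; split; first exact: matchingS (subsetDl _ _) mM.
by rewrite cover_setD ?matching_trivIset // cM setTD.
Qed.

Lemma card_uncovered U Y : is_matching Y -> cover Y \subset U ->
  #|U :\: cover Y| = #|U| - #|Y|.*2.
Proof. by move=> mY YU; rewrite cardsD (setIidPr YU) card_cover_matching. Qed.

Lemma rematch_data X M Y : is_matching X -> perfect_matching M -> X \subset M ->
  Y \in admissible (cover X) ->
  let Q := choose_matching (cover X :\: cover Y) in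
  switch_data (cover X) Y (M :\: X) Q (choose_edge_map Q (M :\: X)).
Proof.
move=> mX pM XM /admissibleP [mY YX RK] Q.
have [mK cK] := perfect_matching_setD pM XM.
have [mQ cQ] : is_matching Q /\ cover Q = cover X :\: cover Y.
  apply: (choose_matchingP (k := #|X| - #|Y|)).
  by rewrite card_uncovered // card_cover_matching // doubleB.
split=> //; apply: choose_edge_mapP => //.
by rewrite -leq_double -!card_cover_matching // cQ cK.
Qed.

Section Counting.
Variables (X : {set {set V}}) (A : {set {set {set V}}}).
Hypothesis mX : is_matching X.
Hypothesis A_contains : forall M, M \in A -> perfect_matching M && (X \subset M).

Lemma rematch_inj :
  {in setX A (admissible (cover X)) &, injective (fun p => rematch X p.1 p.2)}.
Proof.
move=> [M1 Y1] [M2 Y2] /setXP [/A_contains/andP [pM1 XM1] Y1X].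
move=> /setXP [/A_contains/andP [pM2 XM2] Y2X]; rewrite /rematch /= => eR.
have sw1 := rematch_data mX pM1 XM1 Y1X; have sw2 := rematch_data mX pM2 XM2 Y2X.
have eY : Y1 = Y2 by rewrite -(switch_inside sw1) -(switch_inside sw2) eR.
subst Y2; have eK := switch_injK sw1 sw2 eR.
by rewrite -(setID M1 X) -(setID M2 X) (setIidPr XM1) (setIidPr XM2) eK.
Qed.

Lemma card_mul_admissible_le (B : {set {set {set V}}}) :
  (forall M Y, M \in A -> Y \in admissible (cover X) -> rematch X M Y \in B) ->
  #|A| * #|admissible (cover X)| <= #|B|.
Proof.
move=> AB; rewrite -cardsX -(card_in_imset rematch_inj).
by apply/subset_leq_card/subsetP => _ /imsetP [[M Y] /setXP [MA YX] ->]; apply: AB.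
Qed.

End Counting.

Lemma rematch_perfect X M Y : is_matching X -> perfect_matching M -> X \subset M ->
  Y \in admissible (cover X) -> perfect_matching (rematch X M Y).
Proof. by move=> mX pM XM YX; apply: switch_perfect (rematch_data mX pM XM YX). Qed.

Lemma rematch_keeps_outside X M Y P : is_matching X -> perfect_matching M -> X \subset M ->
  Y \in admissible (cover X) -> [disjoint cover P & cover X] ->
  P \subset rematch X M Y -> P \subset M.
Proof.
move=> mX pM XM YX dj /subsetP PR; apply/subsetP => e eP.
have : e \in [set e in rematch X M Y | [disjoint e & cover X]].
  by rewrite inE PR //= (disjointWl (bigcup_sup e eP) dj).
by rewrite (switch_outside (rematch_data mX pM XM YX)) => /setDP [/setDP []].
Qed.

Lemma card_admissible n x U : #|U| = x.*2 -> #|~: U| = (n - x).*2 -> x <= n ->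
  #|admissible U| = \sum_(x.*2 - n <= j < x.+1) #|matchings_in U j|.
Proof.
move=> cU cCU xn.
have in_range Y : Y \in admissible U -> x.*2 - n <= #|Y| < x.+1.
  case/admissibleP => mY YU; rewrite card_uncovered // cU cCU.
  have := subset_leq_card YU; rewrite card_cover_matching // cU; lia.
have fiber j : x.*2 - n <= j < x.+1 -> [set Y in admissible U | #|Y| == j] = matchings_in U j.
  move=> jr; apply/setP => Y; rewrite !inE -andbA; apply: andb_id2l => mY.
  case: (boolP (cover Y \subset U)) => //= YU.
  case: eqP => [cY|]; rewrite ?andbF //= andbT card_uncovered // cU cCU cY; lia.
rewrite -sum1_card (eq_bigr (fun Y => \sum_(x.*2 - n <= j < x.+1) (#|Y| == j : nat))).
  rewrite exchange_big; apply: eq_big_nat => j jr.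
  by rewrite sum_nat_pred_card fiber.
move=> Y /in_range YR; rewrite (eq_bigr (fun j => (j == #|Y| : nat))) => [|j _].
  by rewrite -big_mkcondr big_nat1_eq YR.
by rewrite eq_sym.
Qed.

End Rematch.

Lemma card_matchings_in_ratio (F : numFieldType) (V : finType) (U : {set V}) x j :
  #|U| = x.*2 ->
  (#|matchings_in U j|%:R = 'C(x.*2, j.*2)%:R * ((j.*2)`!%:R / (j`! * 2 ^ j)%:R) :> F)%R.
Proof.
move=> cU; rewrite mulrA -natrM bin_ffact -cU -(card_matchings_in U j) mulnC natrM mulfK //.
by rewrite pnatr_eq0 -lt0n muln_gt0 fact_gt0 expn_gt0.
Qed.

Lemma bigN_card_admissible (V : finType) n x (U : {set V}) :
  #|V| = n.*2 -> #|U| = x.*2 -> x <= n -> bigN n x = (#|admissible U|%:R)%R.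
Proof.
move=> cV cU xn; have cCU : #|~: U| = (n - x).*2.
  by move: (cardsC U); rewrite cV cU doubleB => <-; rewrite addKn.
rewrite (card_admissible cU cCU xn) natr_sum; apply: eq_bigr => j _.
by rewrite (card_matchings_in_ratio _ _ cU).
Qed.

Lemma cond_prob_le_inv n (A E : pred {set {set 'I_(n.*2)}}) k : (0 < prob E)%R -> 0 < k ->
  #|[set M in pm_space n | A M && E M]| * k <= #|[set M in pm_space n | E M]| ->
  (cond_prob A E <= 1 / k%:R)%R.
Proof.
rewrite /cond_prob /prob => PE k0 AEk.
have pm0 : (0 < #|pm_space n|%:R :> rat)%R.
  by rewrite ltr0n lt0n; apply: contraTneq PE => ->; rewrite invr0 mulr0 ltxx.
have E0 : (0 < #|[set M in pm_space n | E M]|%:R :> rat)%R.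
  by move: PE; rewrite pmulr_lgt0 // invr_gt0.
rewrite mulrC invf_div mulrA mulrC !mulrA mulVf ?mul1r ?gt_eqF // mulrC.
by rewrite ler_pdivrMr // mulrC ler_pdivlMr ?ltr0n // -natrM ler_nat.
Qed.

Lemma ev_avoid_rematch n s (S : {set ('I_s * {set {set 'I_(n.*2)}})}) X M Y :
  is_matching X -> perfect_matching M -> X \subset M -> Y \in admissible (cover X) ->
  (forall p, p \in S -> [disjoint cover p.2 & cover X]) ->
  ev_avoid S M -> ev_avoid S (rematch X M Y).
Proof.
move=> mX pM XM YX Sdj /forall_inP avoidM; apply/forall_inP => p pS.
exact: contra (rematch_keeps_outside mX pM XM YX (Sdj p pS)) (avoidM p pS).
Qed.

Theorem mainTheorem5 (n x s : nat) (Ms : 'I_s -> {set {set 'I_(n.*2)}})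
  (S : {set ('I_s * {set {set 'I_(n.*2)}})})
  (i : 'I_s) (X : {set {set 'I_(n.*2)}}) :
  (0 < n)%N -> (0 < x)%N -> (x <= n)%N ->
  (forall k, perfect_matching (Ms k)) ->
  X \subset Ms i -> x_matching x X ->
  (forall p, p \in S ->
     [/\ p.2 \subset Ms p.1, x_matching x p.2 & [disjoint cover p.2 & cover X]]) ->
  (0 < prob (ev_avoid S))%R ->
  (cond_prob (ev_contains X) (ev_avoid S) <= 1 / bigN n x)%R.
Proof.
move=> _ _ xn _ _ /andP [mX /eqP cX] HS PE.
have cU : #|cover X| = x.*2 by rewrite card_cover_matching // cX.
rewrite (bigN_card_admissible (card_ord _) cU xn).
have XX : X \in admissible (cover X) by apply/admissibleP; rewrite setDv cards0.
apply: cond_prob_le_inv => //; first by apply/card_gt0P; exists X.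
apply: (card_mul_admissible_le mX) => [M | M Y + YX].
  by rewrite !inE /ev_contains => /and3P [-> ->].
rewrite !inE /ev_contains => /and3P [pM XM avoidM].
by rewrite rematch_perfect //=; apply: ev_avoid_rematch avoidM => // p /HS [].
Qed.
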